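(* Let $T\subseteq S_k$, let $p\geq 1$, and let $n\geq k+p+1$. Then $S_n(\nu^p(T))=S_n(T)$.
   Context: Two sequences are order-isomorphic if they have the same length $m$ and for all $i<j$, $x_i<x_j$ iff $y_i<y_j$. A permutation $\sigma\in S_n$ contains $\pi\in S_m$ if some subsequence $(\sigma_{i_1},\dots,\sigma_{i_m})$, $i_1<\dots<i_m$, is order-isomorphic to $\pi$; otherwise it avoids $\pi$. For a set $A$ of permutations, $S_n(A)$ is the set of permutations in $S_n$ avoiding every element of $A$. For $\tau\in S_k$ and $m\ge k$, $V_\tau^m$ is the set of all $\alpha\in S_m$ that contain $\tau$. For $T\subseteq S_k$ (any $k$), $\nu(T)=\bigcup_{\tau\in T}V_\tau^{k+1}\subseteq S_{k+1}$; $\nu^1=\nu$ and $\nu^p(T)=\nu(\nu^{p-1}(T))\subseteq S_{k+p}$ for $p>1$. *)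

From mathcomp Require Import all_boot all_fingroup.
Set Implicit Arguments. Unset Strict Implicit. Unset Printing Implicit Defensive.

(* Permutations of {0,...,n-1} are elements of 'S_n = {perm 'I_n}; the
   one-line notation of s is (s 0, ..., s (n-1)). *)

Definition order_iso (m : nat) (x y : 'I_m -> nat) : bool :=
  [forall i : 'I_m, forall j : 'I_m, (i < j) ==> ((x i < x j) == (y i < y j))].

Definition contains (n m : nat) (sigma : 'S_n) (pi : 'S_m) : bool :=
  [exists f : {ffun 'I_m -> 'I_n},
     [forall i : 'I_m, forall j : 'I_m, (i < j) ==> (f i < f j)] &&
     order_iso (fun i => nat_of_ord (sigma (f i))) (fun i => nat_of_ord (pi i))].

Definition Savoid (n k : nat) (A : {set 'S_k}) : {set 'S_n} :=
  [set sigma : 'S_n | [forall tau in A, ~~ contains sigma tau]].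

Definition Vset (k : nat) (tau : 'S_k) (m : nat) : {set 'S_m} :=
  [set alpha : 'S_m | contains alpha tau].

Definition nu (k : nat) (T : {set 'S_k}) : {set 'S_k.+1} :=
  \bigcup_(tau in T) Vset tau k.+1.

Fixpoint nu_iter (k p : nat) (T : {set 'S_k}) : {set 'S_(p + k)} :=
  match p return {set 'S_(p + k)} with
  | 0 => T
  | p'.+1 => nu (nu_iter p' T)
  end.

From mathcomp Require Import all_boot all_fingroup.
Set Implicit Arguments. Unset Strict Implicit. Unset Printing Implicit Defensive.

(* Containment of patterns is transitive, so a permutation containing some
   element of nu^p(T) contains an element of T.  Conversely, if sigma in S_n
   contains tau in S_m with m < n, deleting an entry of sigma outside a fixed
   occurrence of tau leaves a pattern of length n - 1 still containing tau;
   iterating, some pattern of length m + 1 lies between tau and sigma.  Hence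
   every occurrence of tau in T extends to a chain tau < a_1 < ... < a_p inside
   sigma as soon as n >= k + p, and a_p is in nu^p(T). *)

Lemma containsP n m (s : 'S_n) (t : 'S_m) :
  reflect (exists f : 'I_m -> 'I_n, {homo f : i j / i < j} /\
             forall i j : 'I_m, i < j -> (s (f i) < s (f j)) = (t i < t j))
          (contains s t).
Proof.
apply: (iffP existsP) => [[f /andP[/forallP f_incr /forallP sf]]|[f [f_incr sf]]].
  exists f; split=> i j lt_ij.
    by move/forallP: (f_incr i) => /(_ j) /implyP /(_ lt_ij).
  by move/forallP: (sf i) => /(_ j) /implyP /(_ lt_ij) /eqP.
exists [ffun i => f i]; apply/andP; split; apply/forallP=> i; apply/forallP=> j;
  apply/implyP=> lt_ij; rewrite !ffunE; first exact: f_incr.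
by rewrite sf.
Qed.

Lemma contains_refl n (s : 'S_n) : contains s s.
Proof. by apply/containsP; exists id; split. Qed.

Lemma contains_trans n m l (s : 'S_n) (a : 'S_m) (t : 'S_l) :
  contains s a -> contains a t -> contains s t.
Proof.
case/containsP=> f [f_incr sf] /containsP [g [g_incr ag]].
apply/containsP; exists (f \o g); split=> [i j lt_ij|i j lt_ij] /=.
  exact/f_incr/g_incr.
by rewrite sf ?ag ?g_incr.
Qed.

Lemma exists_rank_perm m (x : 'I_m -> nat) : injective x ->
  exists b : 'S_m, forall i j, (b i < b j) = (x i < x j).
Proof.
move=> x_inj; pose r i := #|[pred l | x l < x i]|.
have lt_r_m i : r i < m.
  apply: (@leq_ltn_trans #|predC1 i|).
    by apply/subset_leq_card/subsetP=> l; rewrite !inE; apply: contraTneq => ->; rewrite ltnn.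
  by rewrite cardC1 card_ord ltn_predL (leq_ltn_trans _ (ltn_ord i)).
have r_mono i j : x i < x j -> r i < r j.
  move=> lt_ij; apply/proper_card/properP; split.
    by apply/subsetP=> l; rewrite !inE => /ltn_trans; apply.
  by exists i; rewrite !inE ?ltnn.
pose R i := Ordinal (lt_r_m i).
have ltR i j : (R i < R j) = (x i < x j).
  case: (ltngtP (x i) (x j)) => [/r_mono //|lt_ji|/x_inj ->]; last by rewrite !ltnn.
  by apply/negbTE; rewrite -leqNgt ltnW ?r_mono.
have R_inj : injective R.
  move=> i j eqR; apply: x_inj.
  by case: (ltngtP (x i) (x j)) => //; [rewrite -ltR | rewrite -ltR]; rewrite eqR ltnn.
by exists (perm R_inj) => i j; rewrite !permE ltR.
Qed.

Lemma contains_pattern n m (s : 'S_n) (f : 'I_m -> 'I_n) :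
  {homo f : i j / i < j} ->
  exists b : 'S_m, contains s b /\ forall i j, (b i < b j) = (s (f i) < s (f j)).
Proof.
move=> f_incr.
have f_inj : injective f.
  move=> i j eq_f.
  by case: (ltngtP i j) => [/f_incr|/f_incr|/val_inj //]; rewrite eq_f ltnn.
have [|b bE] := @exists_rank_perm m (fun i => s (f i)).
  by move=> i j /val_inj /perm_inj /f_inj.
by exists b; split=> //; apply/containsP; exists f; split=> // i j _; rewrite bE.
Qed.

Lemma ltn_lift n (x : 'I_n.+1) (i j : 'I_n) : (lift x i < lift x j) = (i < j).
Proof. by rewrite !ltnNge /= leq_bump2. Qed.

Lemma contains_delete_entry n m (s : 'S_n.+1) (a : 'S_m) :
  contains s a -> m <= n -> exists b : 'S_n, contains s b /\ contains b a.
Proof.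
case/containsP=> g [g_incr sg] le_mn.
have [x gx] : exists x, x \notin codom g.
  apply/existsP; rewrite -negb_forall; apply: contraTN le_mn => /forallP g_onto.
  rewrite -ltnNge -[n.+1]card_ord -[m]card_ord -(size_codom g).
  apply: leq_trans (card_size _); apply/subset_leq_card/subsetP=> y _.
  exact: g_onto.
have /fin_all_exists [h gE] : forall i, exists j, g i = lift x j.
  move=> i; case: (unliftP x (g i)) => [j ->|gix]; first by exists j.
  by rewrite -gix codom_f in gx.
have lift_incr : {homo lift x : i j / i < j} by move=> i j; rewrite ltn_lift.
have [b [sb bE]] := contains_pattern s lift_incr.
exists b; split=> //; apply/containsP; exists h; split=> [i j lt_ij|i j lt_ij].
  by rewrite -(ltn_lift x) -!gE g_incr.
by rewrite bE -!gE sg.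
Qed.

Lemma contains_intermediate n m (s : 'S_n) (a : 'S_m) :
  contains s a -> m < n -> exists b : 'S_m.+1, contains s b /\ contains b a.
Proof.
elim: n s => [|n IHn] s sa //; rewrite ltnS leq_eqVlt => /orP [/eqP eq_mn|lt_mn].
  by subst m; exists s; split=> //; apply: contains_refl.
have [c [sc ca]] := contains_delete_entry sa (ltnW lt_mn).
have [b [cb ba]] := IHn c ca lt_mn.
by exists b; split=> //; apply: contains_trans sc cb.
Qed.

Lemma mem_nu_iter_contains k (T : {set 'S_k}) p (a : 'S_(p + k)) :
  a \in nu_iter p T -> exists2 t, t \in T & contains a t.
Proof.
elim: p a => [|p IHp] a /=; first by exists a => //; apply: contains_refl.
case/bigcupP=> b /IHp [t tT bt]; rewrite inE => ab.
by exists t => //; apply: contains_trans ab bt.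
Qed.

Lemma contains_nu_iter k (T : {set 'S_k}) p n (s : 'S_n) (t : 'S_k) :
  t \in T -> contains s t -> p + k <= n ->
  exists2 a, a \in nu_iter p T & contains s a.
Proof.
move=> tT st; elim: p => [|p IHp] le_pk_n; first by exists t.
have [a aT sa] := IHp (ltnW le_pk_n).
have [b [sb ba]] := contains_intermediate sa le_pk_n.
by exists b => //; apply/bigcupP; exists a; rewrite ?inE.
Qed.

Theorem theorem2p8 (k : nat) (T : {set 'S_k}) (p n : nat) :
  1 <= p -> k + p + 1 <= n ->
  Savoid n (nu_iter p T) = Savoid n T.
Proof.
move=> _ le_kp1_n; have le_pk_n : p + k <= n.
  by rewrite addnC (leq_trans (leq_addr 1 _) le_kp1_n).
apply/setP=> s; rewrite !inE; apply/forallP/forallP=> avoid t; apply/implyP=> tA.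
  apply/negP=> st; have [a aT sa] := contains_nu_iter tA st le_pk_n.
  by move/implyP: (avoid a) => /(_ aT) /negP; apply.
apply/negP=> st; have [u uT tu] := mem_nu_iter_contains tA.
by move/implyP: (avoid u) => /(_ uT) /negP; apply; apply: contains_trans st tu.
Qed.
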